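(* Let $G=(V,E)$ be an undirected graph with non-negative edge weights, let $S\subseteq V$ be non-empty, let $u,v\in V$ and let $P(u,v)$ be a shortest path between $u$ and $v$ in $G$. If $P(u,v)$ is not contained in $G_S$, then $\max(h_S(u),h_S(v))\le d_G(u,v)$.
   Context: $d_G(u,v)$ is the shortest-path distance in $G$; $h_S(u)=\min_{s\in S}d_G(u,s)$. For $v\in V$, $E_S(v)$ is the set of edges incident to $v$ whose weight is at most $h_S(v)$; $E_S=\bigcup_{v\in V}E_S(v)$ and $G_S=(V,E_S)$. ''$P(u,v)$ is contained in $G_S$'' means every edge of $P(u,v)$ is in $E_S$. *)

From HB Require Import structures.
From mathcomp Require Import all_boot all_order all_algebra.
From mathcomp Require Import classical_sets boolp reals constructive_ereal ereal.
Set Implicit Arguments. Unset Strict Implicit. Unset Printing Implicit Defensive.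
Import Order.TTheory GRing.Theory Num.Theory.
Local Open Scope classical_set_scope.
Local Open Scope ring_scope.

Definition wgraph (R : realType) (V : finType) (e : rel V) (w : V -> V -> R) :=
  [/\ symmetric e,
      (forall x y, w x y = w y x) & (forall x y, e x y -> 0 <= w x y)].

(* A walk from x is a sequence p of the vertices after x; it is a walk in G if
   consecutive vertices are adjacent. Its weight is the sum of edge weights. *)
Definition walk_weight (R : realType) (V : finType) (w : V -> V -> R)
    (x : V) (p : seq V) : R :=
  \sum_(ab <- zip (x :: p) p) w ab.1 ab.2.

Definition is_walk (V : finType) (e : rel V) (x y : V) (p : seq V) :=
  path e x p && (last x p == y).

(* Shortest-path distance d_G(x,y) in \bar R (+oo if no walk). *)
Definition dG (R : realType) (V : finType) (e : rel V) (w : V -> V -> R)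
    (x y : V) : \bar R :=
  ereal_inf [set (walk_weight w x p)%:E | p in [set p | is_walk e x y p]].

Definition hS (R : realType) (V : finType) (e : rel V) (w : V -> V -> R)
    (S : {set V}) (x : V) : \bar R :=
  ereal_inf [set dG e w x s | s in [set s | s \in S]].

Definition in_ES_at (R : realType) (V : finType) (e : rel V) (w : V -> V -> R)
    (S : {set V}) (v x : V) : Prop :=
  e v x /\ ((w v x)%:E <= hS e w S v)%E.

Definition in_ES (R : realType) (V : finType) (e : rel V) (w : V -> V -> R)
    (S : {set V}) (x y : V) : Prop :=
  in_ES_at e w S x y \/ in_ES_at e w S y x.

Definition contained_in_GS (R : realType) (V : finType) (e : rel V)
    (w : V -> V -> R) (S : {set V}) (x : V) (p : seq V) : Prop :=
  forall ab, ab \in zip (x :: p) p -> in_ES e w S ab.1 ab.2.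

Definition shortest_path (R : realType) (V : finType) (e : rel V)
    (w : V -> V -> R) (x y : V) (p : seq V) : Prop :=
  [/\ is_walk e x y p, uniq (x :: p) & (walk_weight w x p)%:E = dG e w x y].

From mathcomp Require Import all_boot all_order all_algebra.
From mathcomp Require Import classical_sets boolp reals constructive_ereal ereal.
Import Order.TTheory GRing.Theory Num.Theory.
Local Open Scope ring_scope.
Set Implicit Arguments. Unset Strict Implicit.

(* Let (a, b) be an edge of P(u, v) outside E_S, so h_S(a) < w(a, b). Going
   from u along P to a and then along a walk from a to S lighter than w(a, b)
   costs less than the prefix of P up to b, hence h_S(u) <= w(P) = d_G(u, v).
   The same argument on the reversed path, with the edge (b, a), bounds h_S(v). *)

Section Walks.
Variables (R : realType) (V : finType) (e : rel V) (w : V -> V -> R).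

Lemma walk_weight_cons (x z : V) p :
  walk_weight w x (z :: p) = w x z + walk_weight w z p.
Proof. by rewrite /walk_weight /= big_cons. Qed.

Lemma walk_weight_cat (x : V) p q :
  walk_weight w x (p ++ q) = walk_weight w x p + walk_weight w (last x p) q.
Proof.
elim: p x => [|z p IHp] x /=; first by rewrite /walk_weight big_nil add0r.
by rewrite !walk_weight_cons IHp addrA.
Qed.

Lemma walk_weight_ge0 (x : V) p :
  (forall a b, e a b -> 0 <= w a b) -> path e x p -> 0 <= walk_weight w x p.
Proof.
move=> w_ge0; elim: p x => [|z p IHp] x /=; first by rewrite /walk_weight big_nil.
by case/andP=> exz zp; rewrite walk_weight_cons addr_ge0 ?w_ge0 ?IHp.
Qed.

Lemma path_edge (x : V) p a b : path e x p -> (a, b) \in zip (x :: p) p -> e a b.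
Proof.
elim: p x => [|z p IHp] x //= /andP[exz zp].
by rewrite in_cons => /orP[/eqP[-> ->] //|]; apply: IHp.
Qed.

Lemma zip_path_split (x : V) p a b : (a, b) \in zip (x :: p) p ->
  exists p1 p2, p = p1 ++ b :: p2 /\ last x p1 = a.
Proof.
elim: p x => [|z p IHp] x //=.
rewrite in_cons => /orP[/eqP[-> ->]|/IHp[p1 [p2 [-> <-]]]].
  by exists [::], p.
by exists (z :: p1), p2.
Qed.

(* The vertices after [last x p] of the walk [x :: p] traversed backwards. *)
Definition rev_walk (x : V) p := rev (belast x p).

Lemma zip_rev_walk (x : V) p :
  zip (last x p :: rev_walk x p) (rev_walk x p) =
  rev [seq (ab.2, ab.1) | ab <- zip (x :: p) p].
Proof.
rewrite /rev_walk; elim: p x => [|z p IHp] x //=.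
have zip_rcons_cons y s t : zip (y :: rcons s t) (rcons s t) =
    rcons (zip (y :: s) s) (last y s, t).
  by elim: s y => [|? ? IHs] y //=; rewrite IHs.
rewrite rev_cons zip_rcons_cons IHp rev_cons; congr (rcons _ (_, _)).
by case: p {IHp} => [|y p] //=; rewrite rev_cons last_rcons.
Qed.

Lemma mem_zip_rev_walk (x : V) p a b : (a, b) \in zip (x :: p) p ->
  (b, a) \in zip (last x p :: rev_walk x p) (rev_walk x p).
Proof. by move=> ab; rewrite zip_rev_walk mem_rev; apply/mapP; exists (a, b). Qed.

Lemma is_walk_rev (x y : V) p :
  symmetric e -> is_walk e x y p -> is_walk e y x (rev_walk x p).
Proof.
move=> e_sym /andP[xp /eqP <-]; apply/andP; split.
  by rewrite rev_path (eq_path (e' := e)) // => a b; rewrite e_sym.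
by rewrite /rev_walk -(last_cons x) -rev_rcons -lastI rev_cons last_rcons.
Qed.

Lemma walk_weight_rev (x : V) p : (forall a b, w a b = w b a) ->
  walk_weight w (last x p) (rev_walk x p) = walk_weight w x p.
Proof.
move=> w_sym; rewrite /walk_weight zip_rev_walk big_rev big_map.
by apply: eq_bigr => ab _; apply: w_sym.
Qed.

End Walks.

Section Distances.
Variables (R : realType) (V : finType) (e : rel V) (w : V -> V -> R).
Variable S : {set V}.

Lemma dG_le_walk_weight (x y : V) p :
  is_walk e x y p -> (dG e w x y <= (walk_weight w x p)%:E)%E.
Proof. by move=> xyp; apply: ereal_inf_lbound; exists p. Qed.

Lemma hS_le_dG (x s : V) : s \in S -> (hS e w S x <= dG e w x s)%E.
Proof. by move=> sS; apply: ereal_inf_lbound; exists s. Qed.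

Lemma hS_le_walk_weight (x : V) p a b :
  (forall a b, e a b -> 0 <= w a b) -> path e x p ->
  (a, b) \in zip (x :: p) p -> (hS e w S a < (w a b)%:E)%E ->
  (hS e w S x <= (walk_weight w x p)%:E)%E.
Proof.
move=> w_ge0 xp ab /ereal_inf_lt[_ [s /= sS <-]] /ereal_inf_lt[_ [q /= asq <-]].
rewrite lte_fin => q_lt_ab.
have [p1 [p2 [p_split p1a]]] := zip_path_split ab; subst p.
have xsq : is_walk e x s (p1 ++ q).
  move: asq xp; rewrite /is_walk !cat_path last_cat p1a.
  by case/andP=> -> -> /andP[-> _].
have p2_ge0 : 0 <= walk_weight w b p2.
  by move: xp; rewrite cat_path /= => /and3P[_ _ bp2]; apply: walk_weight_ge0 bp2.
apply: le_trans (hS_le_dG x sS) _; apply: le_trans (dG_le_walk_weight xsq) _.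
rewrite lee_fin !walk_weight_cat p1a walk_weight_cons lerD2l.
by apply/ltW/(lt_le_trans q_lt_ab); rewrite lerDl.
Qed.

End Distances.

Theorem lemma4 (R : realType) (V : finType) (e : rel V) (w : V -> V -> R)
    (S : {set V}) (u v : V) (p : seq V) :
  wgraph e w -> S != finset.set0 -> shortest_path e w u v p ->
  ~ contained_in_GS e w S u p ->
  (maxe (hS e w S u) (hS e w S v) <= dG e w u v)%E.
Proof.
move=> [e_sym w_sym w_ge0] _ [uvp _ <-] /existsNP[[a b]] /not_implyP[ab abS].
have /andP[up /eqP last_v] := uvp.
have eab : e a b := path_edge up ab.
have ha : (hS e w S a < (w a b)%:E)%E.
  by rewrite ltNge; apply/negP => ?; apply: abS; left.
have hb : (hS e w S b < (w b a)%:E)%E.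
  by rewrite ltNge; apply/negP => ?; apply: abS; right; split => //; rewrite e_sym.
rewrite ge_max (hS_le_walk_weight w_ge0 up ab ha) /=.
have /andP[vp _] := is_walk_rev e_sym uvp.
rewrite -last_v in vp *; rewrite -(walk_weight_rev u p w_sym).
exact: (hS_le_walk_weight w_ge0 vp (mem_zip_rev_walk ab) hb).
Qed.
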